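(* Let $A$ be a commutative quasi-ring and $I$ an ideal of $A$. Then congruence modulo $I$ is compatible with the addition and the multiplication of $A$, so that the quotient $A/I$ is a quasi-ring. Moreover, if $I\neq A$, then $A/I$ is not trivial, i.e. $1\not\equiv 0 \pmod I$.
   Context: A semiring is a set with two operations $+,\cdot$ such that $(A,+)$ is a commutative monoid with neutral element $0$, $(A,\cdot)$ is a monoid with unit $1$, multiplication distributes over addition, and $0$ is absorbing. A quasi-ring is a semiring whose unit $1$ is quasi-invertible for addition (there is $y$ with $1+y+1=1$, $y+1+y=y$). An ideal of a commutative quasi-ring $A$ is a subset $I$ containing $0$, stable under addition and under multiplication by elements of $A$. Congruence modulo $I$: for $a,b\in A$, $a\equiv b \pmod I$ if and only if $(a+I)\cap(b+I)\neq\emptyset$ and, for every $c\in I$ and every $r\in A$, one has $ac+r\in I \iff bc+r\in I$. $A/I$ denotes the set of congruence classes. *)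

From Stdlib Require Import RelationClasses.

Section Defs.
Context {A : Type} (add mul : A -> A -> A) (zero one : A).

Definition comm_semiring : Prop :=
  (forall x y z, add x (add y z) = add (add x y) z) /\
  (forall x y, add x y = add y x) /\
  (forall x, add zero x = x) /\
  (forall x y z, mul x (mul y z) = mul (mul x y) z) /\
  (forall x y, mul x y = mul y x) /\
  (forall x, mul one x = x) /\
  (forall x y z, mul x (add y z) = add (mul x y) (mul x z)) /\
  (forall x y z, mul (add x y) z = add (mul x z) (mul y z)) /\
  (forall x, mul zero x = zero /\ mul x zero = zero).

Definition quasi_invertible (x : A) : Prop :=
  exists y, add (add x y) x = x /\ add (add y x) y = y.

Definition comm_quasi_ring : Prop :=
  comm_semiring /\ quasi_invertible one.

Definition is_ideal (I : A -> Prop) : Prop :=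
  I zero /\
  (forall x y, I x -> I y -> I (add x y)) /\
  (forall a x, I x -> I (mul a x)).

Definition cong_mod (I : A -> Prop) (a b : A) : Prop :=
  (exists i j, I i /\ I j /\ add a i = add b j) /\
  (forall c r, I c -> (I (add (mul a c) r) <-> I (add (mul b c) r))).

End Defs.

(* A surjection that is
   a homomorphism transports every axiom of a commutative quasi-ring
   (equations hold on representatives), so A/I is a commutative quasi-ring.
   Finally, 1 ≡ 0 (mod I) forces every element into I, which gives
   non-triviality of A/I when I ≠ A. *)

From Stdlib Require Import RelationClasses.
From Stdlib Require Import ClassicalEpsilon FunctionalExtensionality
  PropExtensionality ProofIrrelevance.

Section Congruence.
Variables (A : Type) (add mul : A -> A -> A) (zero one : A) (I : A -> Prop).
Hypothesis HA : comm_semiring add mul zero one.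
Hypothesis HI : is_ideal add mul zero I.

Local Notation cong := (cong_mod add mul I).

Lemma cong_mod_equivalence : Equivalence cong.
Proof.
  destruct HA as [addA [addC [add0 _]]]; destruct HI as [I0 [Iadd _]].
  split.
  - intros a. split; [exists zero, zero; auto | tauto].
  - intros a b [[i [j [Hi [Hj E]]]] Hb]. split.
    + exists j, i; auto.
    + intros c r Hc. specialize (Hb c r Hc). tauto.
  - intros a b c [[i [j [Hi [Hj E]]]] Hab] [[k [l [Hk [Hl F]]]] Hbc]. split.
    + (* a + (i + k) = b + j + k = b + k + j = c + (l + j) *)
      exists (add i k), (add l j). repeat split; auto.
      rewrite addA, E, <- addA, (addC j k), addA, F, <- addA. reflexivity.
    + intros d r Hd. specialize (Hab d r Hd). specialize (Hbc d r Hd). tauto.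
Qed.

Lemma cong_mod_add a a' b b' :
  cong a a' -> cong b b' -> cong (add a b) (add a' b').
Proof.
  destruct HA as [addA [addC [_ [_ [_ [_ [_ [mulDl _]]]]]]]].
  destruct HI as [_ [Iadd _]].
  assert (swap : forall x y z, add (add x y) z = add (add x z) y).
  { intros x y z. rewrite <- addA, (addC y z), addA. reflexivity. }
  intros [[i [j [Hi [Hj E]]]] Ha] [[k [l [Hk [Hl F]]]] Hb]. split.
  - exists (add i k), (add j l). repeat split; auto.
    rewrite addA, (swap a b i), <- (addA (add a i)), E, F, !addA, (swap a' j b').
    reflexivity.
  - (* (a+b)c + r = ac + (bc + r): replace a by a', then b by b' *)
    intros c r Hc. rewrite !mulDl, <- !addA, (Ha c (add (mul b c) r) Hc).
    rewrite !addA, (addC (mul a' c) (mul b c)), (addC (mul a' c) (mul b' c)),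
      <- !addA.
    apply Hb; exact Hc.
Qed.

Lemma cong_mod_mul a a' b b' :
  cong a a' -> cong b b' -> cong (mul a b) (mul a' b').
Proof.
  destruct HA as [addA [addC [_ [mulA [mulC [_ [mulDr [mulDl _]]]]]]]].
  destruct HI as [_ [Iadd Imul]].
  intros [[i [j [Hi [Hj E]]]] Ha] [[k [l [Hk [Hl F]]]] Hb]. split.
  - (* ab + (ib + a'k) = (a+i)b + a'k = a'b + jb + a'k = a'(b+k) + jb *)
    exists (add (mul i b) (mul a' k)), (add (mul a' l) (mul j b)).
    split; [apply Iadd; [rewrite mulC|]; apply Imul; assumption|].
    split; [apply Iadd; [|rewrite mulC]; apply Imul; assumption|].
    rewrite addA, <- mulDl, E, mulDl, <- (addA _ (mul j b)),
      (addC (mul j b)), addA, <- mulDr, F, mulDr, <- !addA.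
    reflexivity.
  - (* since bc ∈ I and a'c ∈ I, replace a then b in (ab)c + r *)
    intros c r Hc.
    rewrite <- !mulA, (Ha (mul b c) r (Imul _ _ Hc)), mulA, (mulC a' b), <- mulA,
      (Hb (mul a' c) r (Imul _ _ Hc)), mulA, (mulC b' a'), <- mulA.
    reflexivity.
Qed.

(* If 1 ≡ 0 (mod I) then I = A: writing 1 + i = j with i, j ∈ I, every a
   satisfies a + ai = aj ∈ I, and the second clause with c = ai removes ai. *)
Lemma cong_one_zero_full : cong one zero -> forall a, I a.
Proof.
  destruct HA as [_ [addC [add0 [_ [mulC [mul1 [mulDr [_ mul0]]]]]]]].
  destruct HI as [_ [_ Imul]].
  intros [[i [j [Hi [Hj E]]]] Hone] a.
  rewrite add0 in E.
  assert (Ha_ai : I (add (mul a i) a)).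
  { rewrite addC, <- (mul1 a) at 1. rewrite (mulC one a), <- mulDr, E.
    apply Imul; exact Hj. }
  specialize (Hone (mul a i) a (Imul _ _ Hi)).
  rewrite mul1, (proj1 (mul0 _)), add0 in Hone.
  apply Hone; exact Ha_ai.
Qed.

End Congruence.

Section Quotient.
Variables (T : Type) (R : T -> T -> Prop).
Hypothesis HR : Equivalence R.

Definition class_type : Type := {P : T -> Prop | exists a, P = R a}.

Definition class_of (a : T) : class_type := exist _ (R a) (ex_intro _ a eq_refl).

Definition repr (q : class_type) : T :=
  proj1_sig (constructive_indefinite_description _ (proj2_sig q)).

Lemma class_of_repr (q : class_type) : class_of (repr q) = q.
Proof.
  destruct q as [P HP]. unfold repr, class_of. simpl.
  destruct (constructive_indefinite_description _ HP) as [a Ha]. simpl.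
  apply subset_eq_compat. symmetry; exact Ha.
Qed.

Lemma class_of_surjective (q : class_type) : exists a, class_of a = q.
Proof. exists (repr q). apply class_of_repr. Qed.

Lemma class_of_eq_iff (a b : T) : class_of a = class_of b <-> R a b.
Proof.
  split.
  - intros E. apply (f_equal (@proj1_sig _ _)) in E. simpl in E.
    rewrite E. reflexivity.
  - intros Hab. apply subset_eq_compat.
    apply functional_extensionality. intros x.
    apply propositional_extensionality. split; intros H.
    + symmetry in Hab. etransitivity; eassumption.
    + etransitivity; eassumption.
Qed.

Definition lift_op (op : T -> T -> T) (p q : class_type) : class_type :=
  class_of (op (repr p) (repr q)).

Lemma class_of_lift_op (op : T -> T -> T) :
  (forall a a' b b', R a a' -> R b b' -> R (op a b) (op a' b')) ->
  forall a b, class_of (op a b) = lift_op op (class_of a) (class_of b).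
Proof.
  intros Hop a b. apply class_of_eq_iff. apply Hop;
    symmetry; apply class_of_eq_iff, class_of_repr.
Qed.

End Quotient.

(* The image of a commutative quasi-ring under a surjective map preserving
   + and · is a commutative quasi-ring: every axiom is an equation which can
   be checked on preimages. *)
Lemma comm_quasi_ring_image (A Q : Type) (add mul : A -> A -> A) (zero one : A)
    (addQ mulQ : Q -> Q -> Q) (pi : A -> Q) :
  comm_quasi_ring add mul zero one ->
  (forall q, exists a, pi a = q) ->
  (forall a b, pi (add a b) = addQ (pi a) (pi b)) ->
  (forall a b, pi (mul a b) = mulQ (pi a) (pi b)) ->
  comm_quasi_ring addQ mulQ (pi zero) (pi one).
Proof.
  intros [[addA [addC [add0 [mulA [mulC [mul1 [mulDr [mulDl mul0]]]]]]]] [y [Hy1 Hy2]]]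
    surj hadd hmul.
  repeat split; intros;
    repeat match goal with q : Q |- _ => destruct (surj q) as [? <-] end;
    rewrite <- ?hadd, <- ?hmul.
  - now rewrite addA.
  - now rewrite addC.
  - now rewrite add0.
  - now rewrite mulA.
  - now rewrite mulC.
  - now rewrite mul1.
  - now rewrite mulDr.
  - now rewrite mulDl.
  - now rewrite (proj1 (mul0 _)).
  - now rewrite (proj2 (mul0 _)).
  - exists (pi y). rewrite <- !hadd, Hy1, Hy2. auto.
Qed.

Theorem proposition2p2 (A : Type) (add mul : A -> A -> A) (zero one : A)
    (I : A -> Prop) :
  comm_quasi_ring add mul zero one ->
  is_ideal add mul zero I ->
  (* congruence mod I is an equivalence relation compatible with + and . *)
  Equivalence (cong_mod add mul I) /\
  (forall a a' b b', cong_mod add mul I a a' -> cong_mod add mul I b b' ->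
     cong_mod add mul I (add a b) (add a' b') /\
     cong_mod add mul I (mul a b) (mul a' b')) /\
  (* hence the quotient A/I, with the induced operations, is a quasi-ring *)
  (exists (Q : Type) (addQ mulQ : Q -> Q -> Q) (zeroQ oneQ : Q) (pi : A -> Q),
     comm_quasi_ring addQ mulQ zeroQ oneQ /\
     (forall q, exists a, pi a = q) /\
     (forall a b, pi a = pi b <-> cong_mod add mul I a b) /\
     (forall a b, pi (add a b) = addQ (pi a) (pi b)) /\
     (forall a b, pi (mul a b) = mulQ (pi a) (pi b)) /\
     pi zero = zeroQ /\ pi one = oneQ) /\
  (* if I <> A then A/I is not trivial *)
  ((exists a, ~ I a) -> ~ cong_mod add mul I one zero).
Proof.
  intros HA HI.
  pose proof (proj1 HA) as Hsemi.
  pose proof (cong_mod_equivalence _ _ _ _ _ _ Hsemi HI) as Heq.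
  pose proof (cong_mod_add _ _ _ _ _ _ Hsemi HI) as cong_add.
  pose proof (cong_mod_mul _ _ _ _ _ _ Hsemi HI) as cong_mul.
  set (C := cong_mod add mul I) in *.
  assert (class_of_add := class_of_lift_op A C Heq add cong_add).
  assert (class_of_mul := class_of_lift_op A C Heq mul cong_mul).
  split; [exact Heq|]. split; [auto|]. split.
  - exists (class_type A C), (lift_op A C add), (lift_op A C mul),
      (class_of A C zero), (class_of A C one), (class_of A C).
    split; [apply (comm_quasi_ring_image A _ add mul); auto using class_of_surjective|].
    split; [exact (class_of_surjective A C)|].
    split; [exact (class_of_eq_iff A C Heq)|].
    auto.
  - intros [a Ha] Hone. exact (Ha (cong_one_zero_full _ _ _ _ _ _ Hsemi HI Hone a)).
Qed.
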